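(* Let $S$ be a polyhedron in $\mathbb{R}^{n+m}$ with points written $(x,y)$, $x\in\mathbb{R}^n$, $y\in\mathbb{R}^m$, and let $j,k\in\{1,\dots,m\}$. Suppose that every $(x,y)\in\operatorname{vert}(S)\cup\operatorname{vert}\bigl(S\cap\{(x,y)\mid y_j=y_k\}\bigr)$ satisfies $y\in\mathbb{Z}^m$. Let $\hat S=\{(x,y,\delta)\in S\times\mathbb{R}\mid y_j\le\delta\le y_k\}$ and assume $\hat S\neq\emptyset$. Then $\operatorname{proj}_{(y,\delta)}\bigl(\operatorname{vert}(\hat S)\bigr)\subseteq\mathbb{Z}^{m+1}$.
   Context: $\operatorname{vert}(S)$ denotes the set of extreme points of $S$, and $\operatorname{proj}_{(y,\delta)}$ is the projection onto the $(y,\delta)$ coordinates. *)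

From HB Require Import structures.
From mathcomp Require Import all_boot all_order all_algebra.
From mathcomp Require Import reals.
Set Implicit Arguments. Unset Strict Implicit. Unset Printing Implicit Defensive.
Import Order.TTheory GRing.Theory Num.Theory.
Local Open Scope ring_scope.

Definition is_polyhedron (R : realType) (d : nat) (S : 'cV[R]_d -> Prop) : Prop :=
  exists (p : nat) (A : 'M[R]_(p, d)) (b : 'cV[R]_p),
    forall z, S z <-> (forall i : 'I_p, (A *m z) i 0 <= b i 0).

Definition is_vertex (R : realType) (d : nat) (S : 'cV[R]_d -> Prop) (z : 'cV[R]_d) : Prop :=
  S z /\ forall (u v : 'cV[R]_d) (t : R), S u -> S v -> 0 < t -> t < 1 ->
    z = t *: u + (1 - t) *: v -> u = v.

Definition ycoord (R : realType) (n m : nat) (w : 'cV[R]_(n + m)) (i : 'I_m) : R :=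
  w (rshift n i) 0.

Definition xy_part (R : realType) (n m : nat) (z : 'cV[R]_(n + m + 1)) : 'cV[R]_(n + m) :=
  usubmx z.
Definition delta_part (R : realType) (n m : nat) (z : 'cV[R]_(n + m + 1)) : R :=
  z (rshift (n + m) (ord0 : 'I_1)) 0.

Definition Shat (R : realType) (n m : nat) (S : 'cV[R]_(n + m) -> Prop) (j k : 'I_m)
  (z : 'cV[R]_(n + m + 1)) : Prop :=
  S (xy_part z) /\ ycoord (xy_part z) j <= delta_part z /\ delta_part z <= ycoord (xy_part z) k.

From HB Require Import structures.
From mathcomp Require Import all_boot all_order all_algebra.
From mathcomp Require Import reals.
From mathcomp Require Import ring lra.
Import Order.TTheory GRing.Theory Num.Theory.
Local Open Scope ring_scope.
Set Implicit Arguments. Unset Strict Implicit.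

(* Let z = (w, delta) be a vertex of S-hat. Then delta is an endpoint of
   [y_j, y_k], say delta = y_c with c = j or c = k, and since u |-> (u, y_c u)
   is linear and maps Q = S ∩ {y_j <= y_k} into S-hat, w is a vertex of Q.
   If y_j w = y_k w, w is then a vertex of the smaller set S ∩ {y_j = y_k};
   otherwise the constraint y_j <= y_k is slack at w, so every segment of S
   through w, shrunk towards w, stays in Q, and w is a vertex of S. *)

Section Vertices.
Variables (R : realType) (p : nat).
Implicit Types (P Q : 'cV[R]_p -> Prop) (u v w : 'cV[R]_p).

Definition affine_fun (g : 'cV[R]_p -> R) : Prop :=
  forall u v t, g (t *: u + (1 - t) *: v) = t * g u + (1 - t) * g v.

Lemma polyhedron_convex P : is_polyhedron P ->
  forall u v t, P u -> P v -> 0 <= t -> t <= 1 -> P (t *: u + (1 - t) *: v).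
Proof.
move=> [q [A [b PE]]] u v t /PE Pu /PE Pv t_ge0 t_le1; apply/PE => i.
have slack_u : 0 <= b i 0 - (A *m u) i 0 by rewrite subr_ge0.
have slack_v : 0 <= b i 0 - (A *m v) i 0 by rewrite subr_ge0.
have t_le1' : 0 <= 1 - t by rewrite subr_ge0.
rewrite -subr_ge0 mulmxDr -!scalemxAr.
rewrite (_ : _ - _ = t * (b i 0 - (A *m u) i 0) + (1 - t) * (b i 0 - (A *m v) i 0)).
  by rewrite addr_ge0 ?mulr_ge0.
by rewrite !mxE; ring.
Qed.

Lemma is_vertex_sub P Q w : is_vertex P w -> Q w -> (forall u, Q u -> P u) ->
  is_vertex Q w.
Proof. by move=> [_ vP] Qw QP; split=> // u v t /QP Pu /QP Pv; apply: vP. Qed.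

Lemma is_vertex_shrink P Q w : is_vertex Q w -> P w ->
  (forall u v, P u -> P v -> exists2 s, 0 < s &
     Q (s *: u + (1 - s) *: w) /\ Q (s *: v + (1 - s) *: w)) ->
  is_vertex P w.
Proof.
move=> [_ vQ] Pw shrink; split=> // u v t Pu Pv t_gt0 t_lt1 w_uv.
have [s s_gt0 [Qu Qv]] := shrink u v Pu Pv.
suff /addIr/(scalerI (lt0r_neq0 s_gt0)) : s *: u + (1 - s) *: w = s *: v + (1 - s) *: w by [].
apply: (vQ _ _ t Qu Qv t_gt0 t_lt1).
apply/matrixP => a b; move/matrixP/(_ a b): w_uv; rewrite !mxE => ->; ring.
Qed.

Lemma is_vertex_lift (T : 'cV[R]_(p + 1) -> Prop) P (g : 'cV[R]_p -> R) w :
  affine_fun g -> is_vertex T (col_mx w (g w)%:M) -> P w ->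
  (forall u, P u -> T (col_mx u (g u)%:M)) -> is_vertex P w.
Proof.
move=> g_aff [_ vT] Pw PT; split=> // u v t Pu Pv t_gt0 t_lt1 w_uv.
suff /eq_col_mx[] : col_mx u (g u)%:M = col_mx v (g v)%:M by [].
apply: (vT _ _ t (PT _ Pu) (PT _ Pv) t_gt0 t_lt1).
by rewrite !scale_col_mx add_col_mx !scale_scalar_mx -raddfD /= -g_aff -w_uv.
Qed.

Lemma small_scale_le (c a b : R) : 0 < c ->
  exists s, [/\ 0 < s, s <= 1, s * a <= c & s * b <= c].
Proof.
move=> c_gt0; set D := c + `|a| + `|b|.
have [a_ge0 b_ge0] := (normr_ge0 a, normr_ge0 b).
have D_gt0 : 0 < D by rewrite /D; lra.
have s_ge0 : 0 <= c / D by rewrite divr_ge0 ?ltW.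
have scale_le (x : R) : `|x| <= D -> c / D * x <= c.
  move=> xD; apply: le_trans (ler_wpM2l s_ge0 (ler_norm x)) _.
  by rewrite -[leRHS](divfK (lt0r_neq0 D_gt0)) ler_wpM2l.
exists (c / D); split; rewrite ?divr_gt0 ?ler_pdivrMr ?mul1r ?scale_le //; rewrite /D; lra.
Qed.

Lemma is_vertex_inactive P (g : 'cV[R]_p -> R) w : is_polyhedron P -> affine_fun g ->
  is_vertex (fun u => P u /\ g u <= 0) w -> g w < 0 -> is_vertex P w.
Proof.
move=> P_poly g_aff vQ gw_lt0; have [[Pw _] _] := vQ.
apply: (is_vertex_shrink vQ Pw) => u v Pu Pv.
have [|s [s_gt0 s_le1 su sv]] := small_scale_le (g u - g w) (g v - g w) (_ : 0 < - g w).
  by rewrite oppr_gt0.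
have shrunk x : P x -> P (s *: x + (1 - s) *: w).
  by move=> Px; apply: polyhedron_convex => //; apply: ltW.
have shrunk_g x : s * (g x - g w) <= - g w -> g (s *: x + (1 - s) *: w) <= 0.
  by rewrite g_aff; lra.
by exists s => //; split; split; by [apply: shrunk | apply: shrunk_g].
Qed.

End Vertices.

Section LiftedPolyhedron.
Variables (R : realType) (n m : nat).
Implicit Types (S : 'cV[R]_(n + m) -> Prop) (w : 'cV[R]_(n + m)).

Lemma xy_part_col_mx w (d : R) : xy_part (col_mx w d%:M) = w.
Proof. exact: col_mxKu. Qed.

Lemma delta_part_col_mx w (d : R) : delta_part (col_mx w d%:M) = d.
Proof. by rewrite /delta_part col_mxEd mxE mulr1n. Qed.

Lemma col_mx_xy_delta (z : 'cV[R]_(n + m + 1)) :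
  col_mx (xy_part z) (delta_part z)%:M = z.
Proof. by rewrite -[RHS]vsubmxK [dsubmx z]mx11_scalar mxE. Qed.

Lemma ycoord_affine (i : 'I_m) : affine_fun (fun u : 'cV[R]_(n + m) => ycoord u i).
Proof. by move=> u v t; rewrite /ycoord !mxE. Qed.

Lemma Shat_vertex_delta S (j k : 'I_m) z : is_vertex (Shat S j k) z ->
  delta_part z = ycoord (xy_part z) j \/ delta_part z = ycoord (xy_part z) k.
Proof.
move=> [[Sw [jd dk]] vS]; set w := xy_part z in Sw jd dk *.
set d := delta_part z in jd dk *.
have [|d_neq_j] := eqVneq d (ycoord w j); first by left.
have [|d_neq_k] := eqVneq d (ycoord w k); first by right.
have j_lt_d : ycoord w j < d by rewrite lt_def d_neq_j jd.
have d_lt_k : d < ycoord w k by rewrite lt_def eq_sym d_neq_k dk.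
set e := Num.min (d - ycoord w j) (ycoord w k - d).
have e_gt0 : 0 < e by rewrite lt_min !subr_gt0 j_lt_d d_lt_k.
have [e_le_j e_le_k] : e <= d - ycoord w j /\ e <= ycoord w k - d by rewrite !ge_min !lexx orbT.
have Shat_near (x : R) : `|x| <= e -> Shat S j k (col_mx w (d + x)%:M).
  move=> x_le; have := ler_norm x; have := ler_norm (- x); rewrite normrN => *.
  by rewrite /Shat xy_part_col_mx delta_part_col_mx; split => //; lra.
have z_mid : z = 2^-1 *: col_mx w (d + e)%:M + (1 - 2^-1) *: col_mx w (d + - e)%:M.
  rewrite -[LHS]col_mx_xy_delta !scale_col_mx add_col_mx -scalerDl addrC subrK scale1r.
  by rewrite !scale_scalar_mx -raddfD /=; congr (col_mx _ _%:M); rewrite -/d; field.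
have half_gt0 : 0 < 2^-1 :> R by rewrite invr_gt0.
have half_lt1 : 2^-1 < 1 :> R by rewrite invf_lt1 // ltr1n.
have e_norm : `|e| <= e by rewrite ger0_norm // ltW.
have e_normN : `|- e| <= e by rewrite normrN.
have /eq_col_mx[_ /matrixP/(_ ord0 ord0)] := vS _ _ _ (Shat_near e e_norm)
  (Shat_near (- e) e_normN) half_gt0 half_lt1 z_mid.
by rewrite !mxE !mulr1n; lra.
Qed.

Lemma Shat_vertex_xy S (j k : 'I_m) z : is_vertex (Shat S j k) z ->
  is_vertex (fun u => S u /\ ycoord u j <= ycoord u k) (xy_part z).
Proof.
move=> vz; have [[Sw [jd dk]] _] := vz.
have [c dc c_jk] : exists2 c, delta_part z = ycoord (xy_part z) c & c = j \/ c = k.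
  by case: (Shat_vertex_delta vz) => ?; [exists j; last left | exists k; last right].
apply: (is_vertex_lift (T := Shat S j k) (ycoord_affine c)).
- by rewrite -dc col_mx_xy_delta.
- by split=> //; apply: le_trans jd dk.
- move=> u [Su jk]; rewrite /Shat xy_part_col_mx delta_part_col_mx.
  by case: c_jk => ->.
Qed.

End LiftedPolyhedron.

Theorem lemma3p3 (R : realType) (n m : nat) (S : 'cV[R]_(n + m) -> Prop) (j k : 'I_m) :
  is_polyhedron S ->
  (forall w : 'cV[R]_(n + m),
     is_vertex S w \/ is_vertex (fun w' => S w' /\ ycoord w' j = ycoord w' k) w ->
     forall i : 'I_m, ycoord w i \is a Num.int) ->
  (exists z, Shat S j k z) ->
  forall z : 'cV[R]_(n + m + 1), is_vertex (Shat S j k) z ->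
    (forall i : 'I_m, ycoord (xy_part z) i \is a Num.int) /\ delta_part z \is a Num.int.
Proof.
move=> S_poly vert_int _ z vz.
have vQ := Shat_vertex_xy vz.
have y_int : forall i, ycoord (xy_part z) i \is a Num.int.
  apply: vert_int; have [Sw] := vQ.1; rewrite le_eqVlt => /orP[/eqP jk | jk].
    by right; apply: (is_vertex_sub vQ) => [|u [Su ->]].
  left; apply: (is_vertex_inactive S_poly (g := fun u => ycoord u j - ycoord u k)).
  - by move=> u v t; rewrite !ycoord_affine; ring.
  - by apply: (is_vertex_sub vQ) => [|u]; rewrite /= subr_le0; [exact: vQ.1 | exact: id].
  - by rewrite subr_lt0.
by split=> //; case: (Shat_vertex_delta vz) => ->.
Qed.
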